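(* Let $\mathcal{H}$ be a complex Hilbert space, $A\in\mathcal{B}(\mathcal{H})$ positive and $S\in\mathcal{B}_A(\mathcal{H})$. Then for every $\theta\in\mathbb{R}$, $$d\omega_A^2(S)\le\omega_A^2\left(e^{i\theta}S+S^{\sharp_A}S\right)+2\|S\|_A^2\left\|\Re_A\left(e^{i\theta}S\right)\right\|_A .$$
   Context: $\mathcal{B}(\mathcal{H})$ denotes the bounded linear operators on $\mathcal{H}$. For positive $A$, $\langle x,z\rangle_A=\langle Ax,z\rangle$ and $\|z\|_A=\|A^{1/2}z\|$. $\mathcal{B}_A(\mathcal{H})$ is the set of $S\in\mathcal{B}(\mathcal{H})$ for which some $R\in\mathcal{B}(\mathcal{H})$ satisfies $AR=S^*A$; for such $S$, $S^{\sharp_A}=A^{\dagger}S^*A$ with $A^\dagger$ the Moore–Penrose inverse of $A$. $\Re_A(T)=\frac{T+T^{\sharp_A}}{2}$. For operators $T$ bounded with respect to $\|\cdot\|_A$: $\|T\|_A=\sup_{\|z\|_A=1}\|Tz\|_A$, $\omega_A(T)=\sup_{\|z\|_A=1}|\langle Tz,z\rangle_A|$, and $d\omega_A(T)=\sup_{\|z\|_A=1}(|\langle Tz,z\rangle_A|^2+\|Tz\|_A^4)^{1/2}$. *)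

From HB Require Import structures.
From mathcomp Require Import all_boot all_order all_algebra.
From mathcomp Require Import complex.
From mathcomp Require Import boolp classical_sets reals.
From mathcomp Require Import trigo.
From Stdlib Require Import ClassicalEpsilon.

Set Implicit Arguments.
Unset Strict Implicit.
Unset Printing Implicit Defensive.

Import Order.TTheory GRing.Theory Num.Theory.
Local Open Scope ring_scope.
Local Open Scope classical_set_scope.

Section HilbertDefs.
Variable R : realType.
Local Notation C := (R[i]).

Definition hnorm (H : lmodType C) (ip : H -> H -> C) (x : H) : R :=
  Num.sqrt (complex.Re (ip x x)).

Definition is_complex_hilbert (H : lmodType C) (ip : H -> H -> C) : Prop :=
  [/\ (forall (a : C) (x y z : H), ip (a *: x + y) z = a * ip x z + ip y z),
      (forall x y : H, ip y x = Num.conj (ip x y)),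
      (forall x : H, 0 <= ip x x),
      (forall x : H, ip x x = 0 -> x = 0) &
      (forall u : nat -> H,
         (forall e : R, 0 < e -> exists N : nat, forall m n : nat,
             (N <= m)%N -> (N <= n)%N -> hnorm ip (u m - u n) < e) ->
         exists l : H, forall e : R, 0 < e -> exists N : nat, forall n : nat,
             (N <= n)%N -> hnorm ip (u n - l) < e)].

Definition bounded_linear (H : lmodType C) (ip : H -> H -> C) (T : H -> H) :=
  (forall (a : C) (x y : H), T (a *: x + y) = a *: T x + T y) /\
  exists M : R, forall x : H, hnorm ip (T x) <= M * hnorm ip x.

Definition positive_op (H : lmodType C) (ip : H -> H -> C) (A : H -> H) :=
  bounded_linear ip A /\ forall x : H, 0 <= ip (A x) x.

Definition is_adjoint (H : lmodType C) (ip : H -> H -> C) (T Tstar : H -> H) :=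
  forall x y : H, ip (T x) y = ip x (Tstar y).

Definition adj (H : lmodType C) (ip : H -> H -> C) (T : H -> H) : H -> H :=
  epsilon (inhabits (fun x : H => x)) (is_adjoint ip T).

(* Moore--Penrose inverse A^dagger y: the unique x in N(A)^perp with
   A x = P_{closure R(A)} y, i.e. with y - A x orthogonal to R(A).
   (Defined on D(A^dagger) = R(A) + R(A)^perp; arbitrary (chosen) outside.) *)
Definition mp_inv (H : lmodType C) (ip : H -> H -> C) (A : H -> H) (y : H) : H :=
  epsilon (inhabits (0 : H))
    (fun x => (forall n : H, A n = 0 -> ip x n = 0) /\
              (forall w : H, ip (y - A x) (A w) = 0)).

Definition in_BA (H : lmodType C) (ip : H -> H -> C) (A S : H -> H) : Prop :=
  bounded_linear ip S /\
  exists Rop : H -> H, bounded_linear ip Rop /\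
    forall x : H, A (Rop x) = adj ip S (A x).

Definition sharpA (H : lmodType C) (ip : H -> H -> C) (A S : H -> H) : H -> H :=
  fun x => mp_inv ip A (adj ip S (A x)).

Definition ReA (H : lmodType C) (ip : H -> H -> C) (A T : H -> H) : H -> H :=
  fun x => (2%:R^-1 : C) *: (T x + sharpA ip A T x).

(* <x, z>_A = <A x, z> and ||z||_A = ||A^{1/2} z|| = sqrt <A z, z>. *)
Definition ipA (H : lmodType C) (ip : H -> H -> C) (A : H -> H) (x z : H) : C :=
  ip (A x) z.

Definition normA (H : lmodType C) (ip : H -> H -> C) (A : H -> H) (z : H) : R :=
  Num.sqrt (complex.Re (ipA ip A z z)).

Definition unitA (H : lmodType C) (ip : H -> H -> C) (A : H -> H) : set H :=
  [set z | normA ip A z = 1].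

Definition opnormA (H : lmodType C) (ip : H -> H -> C) (A T : H -> H) : R :=
  sup [set normA ip A (T z) | z in unitA ip A].

Definition numradA (H : lmodType C) (ip : H -> H -> C) (A T : H -> H) : R :=
  sup [set Normc.normc (ipA ip A (T z) z) | z in unitA ip A].

Definition dnumradA (H : lmodType C) (ip : H -> H -> C) (A T : H -> H) : R :=
  sup [set Num.sqrt (Normc.normc (ipA ip A (T z) z) ^+ 2 + normA ip A (T z) ^+ 4)
      | z in unitA ip A].

Definition expi (theta : R) : C := Complex (cos theta) (sin theta).

End HilbertDefs.

(* For z on the A-unit sphere put w = e^{iθ}<Sz, z>_A and b = ||Sz||_A^2.  Because
   <S^#x, y>_A = <x, Sy>_A, one has <(e^{iθ}S + S^#S)z, z>_A = w + b and
   <Re_A(e^{iθ}S)z, z>_A = Re w, hence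
     |<Sz, z>_A|^2 + ||Sz||_A^4 = |w|^2 + b^2 = |w + b|^2 - 2 b Re w,
   which is at most omega_A(e^{iθ}S + S^#S)^2 + 2 ||S||_A^2 ||Re_A(e^{iθ}S)||_A; taking
   the supremum over z gives the theorem.  The identity for S^# = A^+ S^* A needs the
   Hilbert adjoint S^* (Riesz representation) and A A^+ = id on R(A), which both come
   from the projection theorem in the complete space H.  The suprema are genuine bounds
   because a bounded set in the definition of d omega_A(S) makes S A-bounded, hence also
   S^# and Re_A(e^{iθ}S); for an unbounded set d omega_A(S) is the junk value 0 of [sup]. *)

From mathcomp Require Import all_boot all_order all_algebra.
From mathcomp Require Import complex.
From mathcomp Require Import boolp classical_sets reals trigo.
From mathcomp Require Import ring lra.
From Stdlib Require Import ClassicalEpsilon.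

Set Implicit Arguments.
Unset Strict Implicit.
Unset Printing Implicit Defensive.

Import Order.TTheory GRing.Theory Num.Theory.
Local Open Scope ring_scope.
Local Open Scope complex_scope.

Lemma normc_real (R : rcfType) (r : R) : Normc.normc r%:C = `|r|.
Proof. by rewrite /= expr0n /= addr0 sqrtr_sqr. Qed.

Lemma normc_sqr_add_real (R : rcfType) (w : R[i]) (b : R) :
  Normc.normc w ^+ 2 + b ^+ 2 = Normc.normc (w + b%:C) ^+ 2 - 2 * b * complex.Re w.
Proof.
case: w => u v; rewrite /= !sqr_sqrtr ?addr_ge0 ?sqr_ge0 //; ring.
Qed.

Lemma normc_expi (R : realType) (t : R) : Normc.normc (expi t) = 1.
Proof. by rewrite /= cos2Dsin2 sqrtr1. Qed.

Lemma normc_ge0 (R : rcfType) (z : R[i]) : 0 <= Normc.normc z.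
Proof. by case: z => a b; exact: sqrtr_ge0. Qed.

Lemma normc_Re_le (R : rcfType) (z : R[i]) : `|complex.Re z| <= Normc.normc z.
Proof. by case: z => a b /=; rewrite -sqrtr_sqr ler_wsqrtr // lerDl sqr_ge0. Qed.

Lemma mulc_conj (R : rcfType) (z : R[i]) : z * Num.conj z = (Normc.normc z ^+ 2)%:C.
Proof. by rewrite -normCK rmorphXn. Qed.

Section LinearMap.
Variables (R : realType) (U V : lmodType R[i]) (T : U -> V).
Hypothesis linT : forall (a : R[i]) (x y : U), T (a *: x + y) = a *: T x + T y.

Lemma lin_map0 : T 0 = 0.
Proof. by have := linT (-1) 0 0; rewrite scaler0 addr0 scaleN1r addNr. Qed.

Lemma lin_mapD x y : T (x + y) = T x + T y.
Proof. by rewrite -{1}[x]scale1r linT scale1r. Qed.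

Lemma lin_mapZ a x : T (a *: x) = a *: T x.
Proof. by rewrite -[a *: x]addr0 linT lin_map0 addr0. Qed.

Lemma lin_mapB x y : T (x - y) = T x - T y.
Proof. by rewrite lin_mapD -scaleN1r lin_mapZ scaleN1r. Qed.

End LinearMap.

Lemma eventually_inv_succ_lt (R : realType) (e : R) :
  0 < e -> exists N, forall n, (N <= n)%N -> n.+1%:R^-1 < e.
Proof.
move=> e_gt0; have [N] := ltr_add_invr e_gt0; rewrite add0r => N_lt.
exists N => n le_Nn; apply: le_lt_trans N_lt.
by rewrite lef_pV2 ?posrE // ler_nat.
Qed.

Lemma sup_image_ge0 (R : realType) (T : Type) (U : set T) (g : T -> R) :
  (forall z, 0 <= g z) -> 0 <= sup [set g z | z in U].
Proof.
move=> g_ge0; case: (pselect (has_sup [set g z | z in U])) => [E_sup|/sup_out ->] //.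
have [_ [z Uz _]] := E_sup.1.
by apply: le_trans (g_ge0 z) (sup_upper_bound E_sup _); exists z.
Qed.

Lemma sup_image_le (R : realType) (T : Type) (U : set T) (g : T -> R) (c : R) :
  0 <= c -> (forall z, U z -> g z <= c) -> sup [set g z | z in U] <= c.
Proof.
move=> c_ge0 g_le; case: (pselect (has_sup [set g z | z in U])) => [E_sup|/sup_out ->] //.
by apply: ge_sup E_sup.1 _ => _ [z Uz <-]; exact: g_le.
Qed.

Lemma opnormA_ge0 (R : realType) (H : lmodType R[i]) (ip : H -> H -> R[i])
    (A T : H -> H) :
  0 <= opnormA ip A T.
Proof. by apply: sup_image_ge0 => z; exact: sqrtr_ge0. Qed.

(** * Hermitian forms *)

Section HermitianForm.
Variables (R : realType) (H : lmodType R[i]) (f : H -> H -> R[i]).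
Hypothesis f_linl : forall (a : R[i]) (x y z : H), f (a *: x + y) z = a * f x z + f y z.
Hypothesis f_sym : forall x y : H, f y x = Num.conj (f x y).
Hypothesis f_ge0 : forall x : H, 0 <= f x x.
Local Notation nf := (hnorm f).

Lemma form0l z : f 0 z = 0.
Proof. by have := f_linl (-1) 0 0 z; rewrite scaler0 addr0 mulN1r addNr. Qed.

Lemma formDl x y z : f (x + y) z = f x z + f y z.
Proof. by rewrite -{1}[x]scale1r f_linl mul1r. Qed.

Lemma formZl a x z : f (a *: x) z = a * f x z.
Proof. by rewrite -[a *: x]addr0 f_linl form0l addr0. Qed.

Lemma formBl x y z : f (x - y) z = f x z - f y z.
Proof. by rewrite formDl -scaleN1r formZl mulN1r. Qed.

Lemma formDr x y z : f x (y + z) = f x y + f x z.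
Proof. by rewrite !(f_sym _ x) formDl rmorphD. Qed.

Lemma formZr a x z : f x (a *: z) = Num.conj a * f x z.
Proof. by rewrite !(f_sym _ x) formZl rmorphM. Qed.

Lemma formNr x z : f x (- z) = - f x z.
Proof. by rewrite -scaleN1r formZr rmorphN rmorph1 mulN1r. Qed.

Lemma formBr x y z : f x (y - z) = f x y - f x z.
Proof. by rewrite formDr formNr. Qed.

Lemma form_Re_ge0 x : 0 <= complex.Re (f x x).
Proof. by have := f_ge0 x; rewrite lecE => /andP[]. Qed.

Lemma form_real x : f x x = (complex.Re (f x x))%:C.
Proof. by rewrite RRe_real // ger0_real. Qed.

Lemma hnorm_ge0 x : 0 <= nf x.
Proof. exact: sqrtr_ge0. Qed.

Lemma hnorm_sqr x : nf x ^+ 2 = complex.Re (f x x).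
Proof. by rewrite sqr_sqrtr // form_Re_ge0. Qed.

Lemma hnorm_le x y : (nf x <= nf y) = (complex.Re (f x x) <= complex.Re (f y y)).
Proof. by rewrite ler_sqrt // form_Re_ge0. Qed.

Lemma form_ReD x y :
  complex.Re (f (x + y) (x + y)) =
  complex.Re (f x x) + complex.Re (f y y) + 2 * complex.Re (f x y).
Proof.
rewrite formDl !formDr (f_sym x y).
case: (f x x) (f y y) (f x y) => [? ?] [? ?] [? ?] /=; ring.
Qed.

Lemma form_sub_scale x y (r : R) :
  complex.Re (f (x - (r%:C * f x y) *: y) (x - (r%:C * f x y) *: y)) =
  complex.Re (f x x) - 2 * r * Normc.normc (f x y) ^+ 2
  + r ^+ 2 * Normc.normc (f x y) ^+ 2 * complex.Re (f y y).
Proof.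
rewrite !(formBl, formBr, formZl, formZr) (f_sym x y) (form_real x) (form_real y).
move: (complex.Re (f x x)) (complex.Re (f y y)) => X Y; case: (f x y) => a b.
by rewrite /= sqr_sqrtr ?addr_ge0 ?sqr_ge0 //=; ring.
Qed.

Lemma form_CS_sqr x y :
  Normc.normc (f x y) ^+ 2 <= complex.Re (f x x) * complex.Re (f y y).
Proof.
have key r : 0 <= complex.Re (f x x) - 2 * r * Normc.normc (f x y) ^+ 2
                  + r ^+ 2 * Normc.normc (f x y) ^+ 2 * complex.Re (f y y).
  by rewrite -form_sub_scale form_Re_ge0.
move: key (form_Re_ge0 x) (form_Re_ge0 y).
move: (complex.Re (f x x)) (complex.Re (f y y)) (Normc.normc (f x y) ^+ 2).
move=> X Y N key X0 Y0; have [Y_0|Y_neq0] := eqVneq Y 0.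
  rewrite Y_0 mulr0 leNgt; apply/negP => N_gt0.
  have := key ((X + 1) / N); rewrite Y_0 mulr0 addr0.
  have -> : X - 2 * ((X + 1) / N) * N = - X - 2 by field; rewrite gt_eqF.
  lra.
have Y_gt0 : 0 < Y by rewrite lt_def Y_neq0.
have := key Y^-1.
have -> : X - 2 * Y^-1 * N + Y^-1 ^+ 2 * N * Y = (X * Y - N) / Y by field.
by rewrite pmulr_lge0 ?invr_gt0 // subr_ge0.
Qed.

Lemma form_CS x y : Normc.normc (f x y) <= nf x * nf y.
Proof.
rewrite -(@ler_pXn2r _ 2) ?nnegrE ?mulr_ge0 ?hnorm_ge0 ?normc_ge0 //.
by rewrite exprMn !hnorm_sqr form_CS_sqr.
Qed.

Lemma hnormD x y : nf (x + y) <= nf x + nf y.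
Proof.
rewrite -(@ler_pXn2r _ 2) ?nnegrE ?addr_ge0 ?hnorm_ge0 //.
rewrite sqrrD !hnorm_sqr form_ReD.
have /ler_normlP[_ Re_le] := le_trans (normc_Re_le (f x y)) (form_CS x y); lra.
Qed.

Lemma hnormZ a x : nf (a *: x) = Normc.normc a * nf x.
Proof.
rewrite /hnorm formZl formZr mulrA mulc_conj [f x x]form_real -rmorphM /=.
by rewrite sqrtrM ?sqr_ge0 // sqrtr_sqr ger0_norm // normc_ge0.
Qed.

Lemma hnormN x : nf (- x) = nf x.
Proof. by rewrite -scaleN1r hnormZ normcN Normc.normc1 mul1r. Qed.

Lemma hnormB x y : nf (x - y) = nf (y - x).
Proof. by rewrite -opprB hnormN. Qed.

Lemma hnorm_parallelogram x y :
  nf (x + y) ^+ 2 + nf (x - y) ^+ 2 = 2 * nf x ^+ 2 + 2 * nf y ^+ 2.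
Proof.
rewrite !hnorm_sqr form_ReD formBl !formBr (f_sym x y).
case: (f x x) (f y y) (f x y) => [? ?] [? ?] [? ?] /=; ring.
Qed.

Lemma hnorm_apollonius w x y :
  nf (x - y) ^+ 2 =
  2 * nf (w - x) ^+ 2 + 2 * nf (w - y) ^+ 2 - 4 * nf (w - 2^-1 *: (x + y)) ^+ 2.
Proof.
have := hnorm_parallelogram (w - x) (w - y).
have -> : w - x - (w - y) = y - x by rewrite opprB addrC addrA subrK.
have -> : w - x + (w - y) = 2 *: (w - 2^-1 *: (x + y)).
  rewrite scalerBr scalerA mulfV ?pnatr_eq0 // scale1r scaler_nat mulr2n.
  by rewrite opprD addrACA.
rewrite hnormZ hnormB -(rmorph_nat (real_complex R) 2) normc_real ger0_norm //; lra.
Qed.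

Lemma form_eq0_of_min p v :
  (forall r : R, nf p <= nf (p - (r%:C * f p v) *: v)) -> f p v = 0.
Proof.
move=> p_min; apply: Normc.eq0_normc; apply/eqP.
rewrite -sqrf_eq0 eq_le sqr_ge0 andbT.
set N := Normc.normc (f p v) ^+ 2; set Y := complex.Re (f v v).
have Y0 : 0 <= Y := form_Re_ge0 v.
set s := (Y + 1)^-1; have s_gt0 : 0 < s by rewrite invr_gt0 ltr_wpDl.
have := p_min s; rewrite hnorm_le form_sub_scale -/N -/Y.
have -> : s ^+ 2 * N * Y = s * N * (1 - s).
  by rewrite /s; field; rewrite gt_eqF // ltr_wpDl.
rewrite -subr_ge0.
have -> : complex.Re (f p p) - 2 * s * N + s * N * (1 - s) - complex.Re (f p p)
          = - (s * (1 + s)) * N by ring.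
rewrite mulNr oppr_ge0 pmulr_rle0 //; apply: mulr_gt0 => //; lra.
Qed.

End HermitianForm.

(** * Projection theorem and Riesz representation *)

Section Hilbert.
Variables (R : realType) (H : lmodType R[i]) (ip : H -> H -> R[i]).
Hypothesis hil : is_complex_hilbert ip.
Local Notation nf := (hnorm ip).

Let ip_linl : forall (a : R[i]) (x y z : H), ip (a *: x + y) z = a * ip x z + ip y z.
Proof. by case: hil. Qed.

Let ip_sym : forall x y : H, ip y x = Num.conj (ip x y).
Proof. by case: hil. Qed.

Let ip_ge0 : forall x : H, 0 <= ip x x.
Proof. by case: hil. Qed.

Let ip_eq0 : forall x : H, ip x x = 0 -> x = 0.
Proof. by case: hil. Qed.

Lemma hnorm_eq0 x : nf x = 0 -> x = 0.
Proof.
move=> /eqP; rewrite sqrtr_eq0 => x_le0; apply: ip_eq0.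
rewrite (form_real ip_ge0) (_ : complex.Re _ = 0) //.
by apply/eqP; rewrite eq_le x_le0 form_Re_ge0.
Qed.

Definition is_subspace (M : set H) :=
  [/\ M 0, forall x y, M x -> M y -> M (x + y) & forall (a : R[i]) x, M x -> M (a *: x)].

Definition is_closed (M : set H) :=
  forall l, (forall e, 0 < e -> exists2 u, M u & nf (u - l) < e) -> M l.

Lemma kernel_closed (V : zmodType) (g : H -> V) (size : V -> R) (K : R) :
  {morph g : x y / x - y} -> (forall v, size v <= 0 -> v = 0) ->
  (forall x, size (g x) <= K * nf x) -> is_closed [set x | g x = 0].
Proof.
move=> gB size_le0 gK l l_lim; apply: size_le0; apply/ler_addgt0Pr => e e_gt0.
have K1_gt0 : 0 < `|K| + 1 by apply: ltr_wpDl.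
have [u /= gu] := l_lim _ (divr_gt0 e_gt0 K1_gt0).
rewrite ltr_pdivlMr // hnormB // => ul_lt.
have -> : g l = g (l - u) by rewrite gB gu subr0.
apply: le_trans (gK _) _; have := hnorm_ge0 ip (l - u); have := ler_norm K; nra.
Qed.

Section BestApproximation.
Variable M : set H.
Hypotheses (M_sub : is_subspace M) (M_closed : is_closed M).
Variable w : H.

Lemma minimizing_cauchy (d : R) (m : nat -> H) :
  0 <= d -> (forall k, M (m k)) -> (forall v, M v -> d <= nf (w - v)) ->
  (forall k, nf (w - m k) < d + k.+1%:R^-1) ->
  forall e, 0 < e -> exists N, forall a b, (N <= a)%N -> (N <= b)%N -> nf (m a - m b) < e.
Proof.
move=> d_ge0 Mm d_lb m_min e e_gt0; case: M_sub => _ MD MZ.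
have sqr_bound a b :
    nf (m a - m b) ^+ 2 <= (4 * d + 2) * (a.+1%:R^-1 + b.+1%:R^-1).
  (* Apollonius, with the midpoint of m a and m b at distance at least d from w. *)
  rewrite (hnorm_apollonius ip_linl ip_sym ip_ge0 w).
  have := d_lb _ (MZ 2^-1 _ (MD _ _ (Mm a) (Mm b))).
  have := m_min a; have := m_min b.
  have := hnorm_ge0 ip (w - m a); have := hnorm_ge0 ip (w - m b).
  have : a.+1%:R^-1 <= 1 :> R by rewrite invf_le1 ?ler1n.
  have : b.+1%:R^-1 <= 1 :> R by rewrite invf_le1 ?ler1n.
  have : 0 < a.+1%:R^-1 :> R by rewrite invr_gt0.
  have : 0 < b.+1%:R^-1 :> R by rewrite invr_gt0.
  move: (a.+1%:R^-1) (b.+1%:R^-1) (nf (w - m a)) (nf (w - m b)) => ia ib na nb.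
  nra.
have c_gt0 : 0 < e ^+ 2 / (8 * d + 4) by rewrite divr_gt0 ?exprn_gt0 //; lra.
have [N N_lt] := eventually_inv_succ_lt c_gt0.
exists N => a b le_Na le_Nb; rewrite -(@ltr_pXn2r _ 2) ?nnegrE ?hnorm_ge0 ?ltW //.
apply: le_lt_trans (sqr_bound a b) _.
have := N_lt a le_Na; have := N_lt b le_Nb; rewrite ltr_pdivlMr; last lra.
rewrite ltr_pdivlMr; last lra.
move: (a.+1%:R^-1) (b.+1%:R^-1) => ia ib; nra.
Qed.

Lemma best_approximation : exists2 m, M m & forall v, M v -> nf (w - m) <= nf (w - v).
Proof.
have [M0 _ _] := M_sub; set D := image M (fun v => nf (w - v)).
have D_inf : has_inf D.
  by split; [exists (nf (w - 0)), 0 | exists 0 => _ [v _ <-]; exact: hnorm_ge0].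
have d_lb v : M v -> inf D <= nf (w - v) by move=> Mv; apply: (ge_inf D_inf.2); exists v.
have d_ge0 : 0 <= inf D by apply: lb_le_inf D_inf.1 _ => _ [v _ <-]; exact: hnorm_ge0.
have /choice [m m_min] : forall k : nat, exists v, M v /\ nf (w - v) < inf D + k.+1%:R^-1.
  move=> k; have k_gt0 : 0 < k.+1%:R^-1 :> R by rewrite invr_gt0.
  by have [_ [v Mv <-] lt_d] := inf_adherent k_gt0 D_inf; exists v.
have Mm k : M (m k) by case: (m_min k).
have [_ _ _ _ complete] := hil.
have [l m_to_l] := complete m (minimizing_cauchy d_ge0 Mm d_lb (fun k => (m_min k).2)).
have Ml : M l.
  apply: M_closed => e e_gt0; have [N mN] := m_to_l e e_gt0.
  by exists (m N); [exact: Mm | exact: mN].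
exists l => // v Mv; apply: le_trans (d_lb v Mv); apply/ler_addgt0Pr => e e_gt0.
have e2_gt0 : 0 < e / 2 by rewrite divr_gt0.
have [N1 N1_lt] := eventually_inv_succ_lt e2_gt0; have [N2 N2_lt] := m_to_l _ e2_gt0.
have := hnormD ip_linl ip_sym ip_ge0 (w - m (maxn N1 N2)) (m (maxn N1 N2) - l).
rewrite addrA subrK.
have := N1_lt _ (leq_maxl N1 N2); have := N2_lt _ (leq_maxr N1 N2).
have := (m_min (maxn N1 N2)).2.
by move: (_.+1%:R^-1) => i_k; lra.
Qed.

Lemma orthogonal_projection : exists2 m, M m & forall v, M v -> ip (w - m) v = 0.
Proof.
have [m Mm m_best] := best_approximation; exists m => // v Mv.
apply: (form_eq0_of_min ip_linl ip_sym ip_ge0) => r.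
by rewrite -addrA -opprD; apply: m_best; case: M_sub => _ MD MZ; apply: MD => //; apply: MZ.
Qed.

End BestApproximation.

Lemma riesz_representation (g : H -> R[i]) :
  (forall (a : R[i]) x y, g (a *: x + y) = a * g x + g y) ->
  (exists K, forall x, Normc.normc (g x) <= K * nf x) ->
  exists v, forall x, g x = ip x v.
Proof.
move=> g_lin [K gK].
have g0 : g 0 = 0 := lin_map0 (V := R[i]^o) g_lin.
have gD x y : g (x + y) = g x + g y := lin_mapD (V := R[i]^o) g_lin x y.
have gZ a x : g (a *: x) = a * g x := lin_mapZ (V := R[i]^o) g_lin a x.
have gB x y : g (x - y) = g x - g y := lin_mapB (V := R[i]^o) g_lin x y.
have [g_eq0|/existsNP[w /eqP gw]] := pselect (forall x, g x = 0).
  by exists 0 => x; rewrite g_eq0 ip_sym (form0l ip_linl) conjC0.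
have ker_sub : is_subspace [set x | g x = 0].
  split=> [|x y /= gx gy|a x /= gx] //; first by rewrite gD gx gy addr0.
  by rewrite gZ gx mulr0.
have ker_closed : is_closed [set x | g x = 0].
  apply: (kernel_closed gB _ gK) => v v_le0; apply: Normc.eq0_normc.
  by apply/eqP; rewrite eq_le v_le0 normc_ge0.
have [m /= gm m_orth] := orthogonal_projection ker_sub ker_closed w.
set p := w - m; have gp : g p = g w by rewrite gB gm subr0.
have pp_neq0 : ip p p != 0.
  by apply: contra gw => /eqP /ip_eq0 p0; rewrite -gp p0 g0.
exists ((Num.conj (g p / ip p p)) *: p) => x.
have x_proj : g (x - (g x / g p) *: p) = 0 by rewrite gB gZ divfK ?gp ?subrr.
have : ip (x - (g x / g p) *: p) p = 0 by rewrite ip_sym m_orth // conjC0.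
rewrite (formBl ip_linl) (formZl ip_linl) (formZr ip_linl ip_sym) conjCK.
by move=> /eqP; rewrite subr_eq0 => /eqP ->; field; rewrite gp gw.
Qed.

Lemma adjoint_exists (T : H -> H) : bounded_linear ip T -> is_adjoint ip T (adj ip T).
Proof.
move=> [T_lin [K TK]]; apply: epsilon_spec.
have /choice [Ts Ts_adj] : forall y, exists v, forall x, ip (T x) y = ip x v.
  move=> y; apply: riesz_representation => [a x z|]; first by rewrite T_lin ip_linl.
  exists (K * nf y) => x; apply: le_trans (form_CS ip_linl ip_sym ip_ge0 _ _) _.
  by rewrite mulrAC ler_wpM2r ?hnorm_ge0.
by exists Ts.
Qed.

Lemma adjoint_unique (T T1 T2 : H -> H) :
  is_adjoint ip T T1 -> is_adjoint ip T T2 -> T1 =1 T2.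
Proof.
move=> T1_adj T2_adj y; apply/eqP; rewrite -subr_eq0; apply/eqP/ip_eq0.
by rewrite (formBr ip_linl ip_sym) -T1_adj -T2_adj subrr.
Qed.

Lemma bounded_linear_scale (a : R[i]) (T : H -> H) :
  bounded_linear ip T -> bounded_linear ip (fun x => a *: T x).
Proof.
case=> T_lin [K TK]; split=> [b x y|].
  by rewrite T_lin scalerDr scalerA mulrC -scalerA.
exists (Normc.normc a * K) => x; rewrite (hnormZ ip_linl ip_sym ip_ge0) -mulrA.
by rewrite ler_wpM2l ?normc_ge0.
Qed.

(** * The semi-inner product of a positive operator *)

Section PositiveOperator.
Variable A : H -> H.
Hypothesis A_pos : positive_op ip A.
Local Notation fA := (ipA ip A).
Local Notation nA := (normA ip A).

Let A_lin : forall (a : R[i]) (x y : H), A (a *: x + y) = a *: A x + A y.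
Proof. by case: A_pos => [[]]. Qed.

Lemma positive_op_selfadj x y : ip (A x) y = ip x (A y).
Proof.
(* [d] is sesquilinear and vanishes on the diagonal, as <A u, u> is real;
   polarization with c = 1 and c = i kills it. *)
pose d u v := ip (A u) v - ip u (A v).
have d_diag u : d u u = 0.
  by rewrite /d (ip_sym (A u)) geC0_conj ?subrr //; case: A_pos.
have d_cross (c : R[i]) : Num.conj c * d x y + c * d y x = 0.
  have : d (x + c *: y) (x + c *: y) =
         d x x + Num.conj c * d x y + c * d y x + c * Num.conj c * d y y.
    rewrite /d !(lin_mapD A_lin, lin_mapZ A_lin, formDl ip_linl, formZl ip_linl).
    by rewrite !(formDr ip_linl ip_sym, formZr ip_linl ip_sym); ring.
  by rewrite !d_diag mulr0 add0r addr0 => /esym.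
have := d_cross 1; have := d_cross 'i%R; rewrite conjC1 conjCi !mul1r => cross_i cross_1.
have : 2 * 'i%R * d x y = 0.
  have -> : 2 * 'i%R * d x y = 'i%R * (d x y + d y x) - (- 'i%R * d x y + 'i%R * d y x).
    by ring.
  by rewrite cross_1 cross_i mulr0 subr0.
move/eqP; rewrite !mulf_eq0 pnatr_eq0 (negbTE (neq0Ci _)) /=.
by rewrite /d subr_eq0 => /eqP.
Qed.

Lemma ipA_linl (a : R[i]) x y z : fA (a *: x + y) z = a * fA x z + fA y z.
Proof. by rewrite /ipA A_lin ip_linl. Qed.

Lemma ipA_sym x y : fA y x = Num.conj (fA x y).
Proof. by rewrite /ipA positive_op_selfadj ip_sym. Qed.

Lemma ipA_ge0 x : 0 <= fA x x.
Proof. exact: A_pos.2. Qed.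

Lemma A_mp_inv u : A (mp_inv ip A (A u)) = A u.
Proof.
have [_ [K AK]] := A_pos.1.
have kerA_sub : is_subspace [set x | A x = 0].
  split=> [|x y /= Ax Ay|a x /= Ax]; first exact: lin_map0 A_lin.
    by rewrite (lin_mapD A_lin) Ax Ay addr0.
  by rewrite (lin_mapZ A_lin) Ax scaler0.
have kerA_closed : is_closed [set x | A x = 0].
  apply: (kernel_closed (lin_mapB A_lin) _ AK) => v v_le0; apply: hnorm_eq0.
  by apply/eqP; rewrite eq_le v_le0 hnorm_ge0.
have [m /= Am m_orth] := orthogonal_projection kerA_sub kerA_closed u.
have mp_spec : exists x, (forall n, A n = 0 -> ip x n = 0) /\
                         (forall w, ip (A u - A x) (A w) = 0).
  exists (u - m); split=> [n An|w]; first exact: m_orth.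
  by rewrite (lin_mapB A_lin) Am subr0 subrr (form0l ip_linl).
(* A u - A x is orthogonal to R(A) and lies in R(A). *)
rewrite /mp_inv; case: (epsilon_spec (inhabits (0 : H)) _ mp_spec) => _.
set x := epsilon _ _ => x_spec.
have := x_spec (u - x); rewrite (lin_mapB A_lin) => /ip_eq0 /eqP.
by rewrite subr_eq0 => /eqP.
Qed.

Lemma A_sharpA (T : H -> H) z : in_BA ip A T -> A (sharpA ip A T z) = adj ip T (A z).
Proof. by case=> _ [Rop [_ ARop]]; rewrite /sharpA -ARop A_mp_inv. Qed.

Lemma ipA_sharpA (T : H -> H) :
  in_BA ip A T -> forall w z, fA (sharpA ip A T w) z = fA w (T z).
Proof.
move=> T_BA w z; rewrite /ipA A_sharpA // ip_sym -(adjoint_exists T_BA.1) -ip_sym //.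
Qed.

Lemma in_BA_scale (a : R[i]) (T : H -> H) :
  in_BA ip A T -> in_BA ip A (fun x => a *: T x).
Proof.
case=> T_bl [Rop [Rop_bl ARop]]; split; first exact: bounded_linear_scale.
exists (fun x => Num.conj a *: Rop x); split; first exact: bounded_linear_scale.
have aT_adj : is_adjoint ip (fun x => a *: T x) (fun y => Num.conj a *: adj ip T y).
  move=> x y; rewrite (formZl ip_linl) (formZr ip_linl ip_sym) conjCK.
  by rewrite (adjoint_exists T_bl).
move=> x; rewrite (lin_mapZ A_lin) ARop.
exact: adjoint_unique aT_adj (adjoint_exists (bounded_linear_scale a T_bl)) _.
Qed.

Lemma normA_ge0 x : 0 <= nA x.
Proof. exact: hnorm_ge0. Qed.

Lemma normA_sqr x : nA x ^+ 2 = complex.Re (fA x x).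
Proof. exact: hnorm_sqr ipA_ge0 x. Qed.

Lemma normA_CS x y : Normc.normc (fA x y) <= nA x * nA y.
Proof. exact: form_CS ipA_linl ipA_sym ipA_ge0 x y. Qed.

Lemma normAD x y : nA (x + y) <= nA x + nA y.
Proof. exact: hnormD ipA_linl ipA_sym ipA_ge0 x y. Qed.

Lemma normAZ (a : R[i]) x : nA (a *: x) = Normc.normc a * nA x.
Proof. exact: hnormZ ipA_linl ipA_sym ipA_ge0 a x. Qed.

Lemma normA_scale_bound (T : H -> H) (K : R) :
  (forall (a : R[i]) x, T (a *: x) = a *: T x) ->
  (forall z, unitA ip A z -> nA (T z) <= K) ->
  forall w, 0 < nA w -> nA (T w) <= K * nA w.
Proof.
move=> TZ TK w w_gt0.
have c_norm : Normc.normc (nA w)^-1%:C = (nA w)^-1.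
  by rewrite normc_real ger0_norm // invr_ge0 ltW.
have := TK ((nA w)^-1%:C *: w); rewrite /unitA /= TZ !normAZ c_norm mulVf ?gt_eqF //.
by rewrite mulrC ler_pdivrMr // => /(_ erefl).
Qed.

Lemma normA_adjoint_bound (X Y : H -> H) (K : R) : 0 <= K ->
  (forall w z, fA (Y w) z = fA w (X z)) ->
  (forall w, 0 < nA w -> nA (X w) <= K * nA w) ->
  forall w, nA (Y w) <= K * nA w.
Proof.
move=> K_ge0 YX X_bd w; have := normA_ge0 (Y w).
rewrite le_eqVlt => /orP[/eqP <-|Yw_gt0]; first by rewrite mulr_ge0 ?normA_ge0.
have : nA (Y w) ^+ 2 <= nA w * (K * nA (Y w)).
  rewrite normA_sqr YX; have /ler_normlP[_ Re_le] := normc_Re_le (fA w (X (Y w))).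
  apply: le_trans Re_le (le_trans (normA_CS _ _) _).
  by rewrite ler_wpM2l ?normA_ge0 ?X_bd.
have := normA_ge0 w; nra.
Qed.

Lemma le_opnormA (T : H -> H) (K : R) :
  (forall z, unitA ip A z -> nA (T z) <= K) ->
  forall z, unitA ip A z -> nA (T z) <= opnormA ip A T.
Proof.
move=> TK z Uz; apply: ub_le_sup; last by exists z.
by exists K => _ [u Uu <-]; exact: TK.
Qed.

Lemma le_numradA (T : H -> H) (K : R) :
  (forall z, unitA ip A z -> nA (T z) <= K) ->
  forall z, unitA ip A z -> Normc.normc (fA (T z) z) <= numradA ip A T.
Proof.
have CS_unit u : unitA ip A u -> Normc.normc (fA (T u) u) <= nA (T u).
  by move=> Uu; apply: le_trans (normA_CS _ _) _; rewrite Uu mulr1.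
move=> TK z Uz; apply: ub_le_sup; last by exists z.
by exists K => _ [u Uu <-]; exact: le_trans (CS_unit u Uu) (TK u Uu).
Qed.

Section SquareBound.
Variables (S : H -> H) (theta : R).
Hypothesis S_BA : in_BA ip A S.
Local Notation e := (expi theta).

Lemma ipA_expiS_sharpS z :
  fA (e *: S z + sharpA ip A S (S z)) z = e * fA (S z) z + (nA (S z) ^+ 2)%:C.
Proof. by rewrite ipA_linl (ipA_sharpA S_BA) (form_real ipA_ge0) normA_sqr. Qed.

Lemma ipA_ReA z :
  fA (ReA ip A (fun x => e *: S x) z) z = (complex.Re (e * fA (S z) z))%:C.
Proof.
rewrite /ReA (formZl ipA_linl) (formDl ipA_linl) (formZl ipA_linl).
rewrite (ipA_sharpA (in_BA_scale e S_BA)) (formZr ipA_linl ipA_sym).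
by rewrite (ipA_sym (S z) z) ReJ_add mulrC rmorphM.
Qed.

Lemma dnumradA_term_identity z :
  Normc.normc (fA (S z) z) ^+ 2 + nA (S z) ^+ 4 =
  Normc.normc (fA (e *: S z + sharpA ip A S (S z)) z) ^+ 2
  - 2 * nA (S z) ^+ 2 * complex.Re (fA (ReA ip A (fun x => e *: S x) z) z).
Proof.
rewrite ipA_expiS_sharpS ipA_ReA /= -normc_sqr_add_real.
by rewrite Normc.normcM normc_expi mul1r -exprM.
Qed.

Section UnitSphereBound.
Variable K : R.
Hypotheses (K_ge0 : 0 <= K) (S_unit : forall z, unitA ip A z -> nA (S z) <= K).

Let S_bound : forall w, 0 < nA w -> nA (S w) <= K * nA w.
Proof. exact: normA_scale_bound (lin_mapZ S_BA.1.1) S_unit. Qed.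

Lemma normA_expiS_sharpS_le u :
  unitA ip A u -> nA (e *: S u + sharpA ip A S (S u)) <= K + K * K.
Proof.
move=> Uu; apply: le_trans (normAD _ _) _; rewrite normAZ normc_expi mul1r.
have Ssharp_bound := normA_adjoint_bound K_ge0 (ipA_sharpA S_BA) S_bound.
by apply: lerD (S_unit Uu) (le_trans (Ssharp_bound _) _); rewrite ler_wpM2l // S_unit.
Qed.

Lemma normA_ReA_le u : unitA ip A u -> nA (ReA ip A (fun x => e *: S x) u) <= K.
Proof.
have eS_bound w : 0 < nA w -> nA (e *: S w) <= K * nA w.
  by move=> /S_bound; rewrite normAZ normc_expi mul1r.
have half : Normc.normc (2^-1 : R[i]) = 2^-1.
  by rewrite -(rmorph_nat (real_complex R) 2) -fmorphV normc_real ger0_norm // invr_ge0.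
move=> Uu; rewrite /ReA normAZ half.
have := normAD (e *: S u) (sharpA ip A (fun x => e *: S x) u).
have := normA_adjoint_bound K_ge0 (ipA_sharpA (in_BA_scale e S_BA)) eS_bound u.
by have := S_unit Uu; rewrite normAZ normc_expi mul1r (Uu : nA u = 1); lra.
Qed.

Lemma dnumradA_term_le z : unitA ip A z ->
  Normc.normc (fA (S z) z) ^+ 2 + nA (S z) ^+ 4 <=
  numradA ip A (fun x => e *: S x + sharpA ip A S (S x)) ^+ 2
  + 2 * opnormA ip A S ^+ 2 * opnormA ip A (ReA ip A (fun x => e *: S x)).
Proof.
move=> Uz; rewrite dnumradA_term_identity; set R_e := ReA ip A (fun x => e *: S x).
have numrad_le := le_numradA (T := fun x => e *: S x + sharpA ip A S (S x))
  normA_expiS_sharpS_le Uz.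
have numrad_sqr_le : Normc.normc (fA (e *: S z + sharpA ip A S (S z)) z) ^+ 2 <=
                     numradA ip A (fun x => e *: S x + sharpA ip A S (S x)) ^+ 2.
  by apply: lerXn2r; rewrite ?nnegrE ?normc_ge0 ?(le_trans (normc_ge0 _) numrad_le).
have opnormS_le : nA (S z) ^+ 2 <= opnormA ip A S ^+ 2.
  by apply: lerXn2r; rewrite ?nnegrE ?normA_ge0 ?opnormA_ge0 ?(le_opnormA S_unit Uz).
have NRe_le : - complex.Re (fA (R_e z) z) <= opnormA ip A R_e.
  have /ler_normlP[Re_le _] := normc_Re_le (fA (R_e z) z).
  apply: le_trans Re_le (le_trans (normA_CS _ _) _).
  by rewrite Uz mulr1 (le_opnormA normA_ReA_le Uz).
have : nA (S z) ^+ 2 * - complex.Re (fA (R_e z) z) <=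
       opnormA ip A S ^+ 2 * opnormA ip A R_e.
  apply: le_trans (ler_wpM2l (sqr_ge0 _) NRe_le) _.
  by rewrite ler_wpM2r ?opnormA_ge0.
lra.
Qed.

End UnitSphereBound.

End SquareBound.

End PositiveOperator.

End Hilbert.

Lemma dnumradA_sqr_le (R : realType) (H : lmodType R[i]) (ip : H -> H -> R[i])
    (A S : H -> H) (c : R) : 0 <= c ->
  (forall K, 0 <= K -> (forall z, unitA ip A z -> normA ip A (S z) <= K) ->
     forall z, unitA ip A z ->
     Normc.normc (ipA ip A (S z) z) ^+ 2 + normA ip A (S z) ^+ 4 <= c) ->
  dnumradA ip A S ^+ 2 <= c.
Proof.
move=> c_ge0 term_le; rewrite /dnumradA; set E := (X in sup X).
have [[B B_ub]|E_unbdd] := pselect (has_ubound E); last first.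
  by rewrite sup_out ?expr0n // => -[].
have S_unit z : unitA ip A z -> normA ip A (S z) <= 1 + `|B|.
  move=> Uz; have : normA ip A (S z) ^+ 2 <= B.
    apply: le_trans (B_ub _ (ex_intro2 _ _ z Uz erefl)).
    rewrite -(ger0_norm (sqr_ge0 (normA ip A (S z)))) -sqrtr_sqr ler_wsqrtr //.
    by rewrite -exprM lerDr sqr_ge0.
  have : 0 <= normA ip A (S z) := sqrtr_ge0 _.
  have := ler_norm B; nra.
have E_ge0 : 0 <= sup E by apply: sup_image_ge0 => z; exact: sqrtr_ge0.
rewrite -(sqr_sqrtr c_ge0) (@ler_pXn2r _ 2) ?nnegrE ?sqrtr_ge0 //.
apply: sup_image_le => [|z Uz]; first exact: sqrtr_ge0.
by apply/ler_wsqrtr/(term_le (1 + `|B|)); rewrite ?addr_ge0.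
Qed.

Theorem theorem2p13 (R : realType) (H : lmodType (R[i])) (ip : H -> H -> R[i])
  (A S : H -> H) (theta : R) :
  is_complex_hilbert ip ->
  positive_op ip A ->
  in_BA ip A S ->
  dnumradA ip A S ^+ 2 <=
    numradA ip A (fun x => expi theta *: S x + sharpA ip A S (S x)) ^+ 2
    + 2%:R * opnormA ip A S ^+ 2 * opnormA ip A (ReA ip A (fun x => expi theta *: S x)).
Proof.
move=> hil A_pos S_BA; apply: dnumradA_sqr_le.
  by rewrite addr_ge0 ?sqr_ge0 // !mulr_ge0 ?sqr_ge0 ?opnormA_ge0.
exact (dnumradA_term_le hil A_pos theta S_BA).
Qed.
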